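(* Let $P$ be a poset, let $\mathbf{Ch}_P$ be the full subcategory of $\mathbf{Pos}_{in}$ whose objects are the chains of $P$, and let $\mathcal{F}_P:\mathbf{Ch}_P\to\mathbf{Pos}$ be the inclusion functor (the diagram of chains of $P$). Then $\operatorname{colim}\mathcal{F}_P=P$ in $\mathbf{Pos}$.
   Context: $\mathbf{Pos}$ is the category of posets and order-preserving maps; $\mathbf{Pos}_{in}$ is its wide subcategory whose morphisms are the order-preserving inclusions. A chain of $P$ is a totally ordered sub-poset of $P$ (with the induced order); morphisms in $\mathbf{Ch}_P$ are the inclusions between chains. *)

From HB Require Import structures.
From mathcomp Require Import all_boot all_order.
Set Implicit Arguments. Unset Strict Implicit. Unset Printing Implicit Defensive.
Import Order.TTheory.
Local Open Scope order_scope.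

Record chain (d : Order.disp_t) (P : porderType d) := Chain {
  chain_set :> P -> Prop;
  chain_total : forall x y : P, chain_set x -> chain_set y -> (x <= y) || (y <= x)
}.

Definition chain_elt d (P : porderType d) (C : chain P) := {x : P | C x}.

(* Morphisms of Ch_P: inclusions C ⊆ D; the induced map C -> D. *)
Definition chain_incl d (P : porderType d) (C D : chain P) :=
  forall x : P, C x -> D x.

Definition incl_map d (P : porderType d) (C D : chain P) (h : chain_incl C D)
  (x : chain_elt C) : chain_elt D := exist _ (proj1_sig x) (h _ (proj2_sig x)).

Definition is_cocone d (P : porderType d) d' (Q : porderType d')
  (f : forall C : chain P, chain_elt C -> Q) : Prop :=
  (forall (C : chain P) (x y : chain_elt C),
      proj1_sig x <= proj1_sig y -> f C x <= f C y) /\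
  (forall (C D : chain P) (h : chain_incl C D) (x : chain_elt C),
      f D (incl_map h x) = f C x).

Definition is_colimit_of_chains d (P : porderType d) d0 (A : porderType d0)
  (iota : forall C : chain P, chain_elt C -> A) : Prop :=
  is_cocone iota /\
  forall d' (Q : porderType d') (f : forall C : chain P, chain_elt C -> Q),
    is_cocone f ->
    exists! g : A -> Q,
      {homo g : x y / x <= y} /\ forall (C : chain P) (x : chain_elt C), g (iota C x) = f C x.

Definition chain_inclusion d (P : porderType d) (C : chain P) (x : chain_elt C) : P :=
  proj1_sig x.

(* Every element x of P lies in the singleton chain {x}, and every comparable
   pair x <= y in the two-element chain {x, y}.  A cocone (Q, f) is therefore
   determined by the values g x := f_{x} x, compatibility with the inclusions
   {x} ⊆ C shows that g restricts to f_C on every chain C, and monotonicity of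
   f_{x,y} makes g monotone. *)
From mathcomp Require Import all_boot all_order.
From Stdlib Require Import FunctionalExtensionality.
Import Order.TTheory.
Local Open Scope order_scope.

Section ChainDiagram.
Variables (d : Order.disp_t) (P : porderType d).

Definition singleton_chain (x : P) : chain P.
Proof. by refine (@Chain d P (fun z => z = x) _) => a b -> ->; rewrite lexx. Defined.

Definition pair_chain (x y : P) (le_xy : x <= y) : chain P.
Proof.
refine (@Chain d P (fun z => z = x \/ z = y) _).
by move=> a b [->|->] [->|->]; rewrite ?lexx ?le_xy ?orbT.
Defined.

Lemma chain_inclusion_cocone : is_cocone (@chain_inclusion d P).
Proof. by split. Qed.

Section Factorization.
Variables (d' : Order.disp_t) (Q : porderType d').
Variables (f : forall C : chain P, chain_elt C -> Q) (f_cocone : is_cocone f).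

Definition cocone_factor (x : P) : Q :=
  f (singleton_chain x) (exist _ x (erefl x)).

Lemma cocone_factorE (C : chain P) (x : P) (Cx : C x) :
  f C (exist _ x Cx) = cocone_factor x.
Proof.
pose sub : chain_incl (singleton_chain x) C := fun z (e : z = x) => eq_ind_r C Cx e.
(* [sub] is transparent, so [incl_map sub] maps [x] to [exist _ x Cx] by
   conversion and no proof irrelevance is needed. *)
exact: (proj2 f_cocone _ _ sub (exist _ x (erefl x))).
Qed.

Lemma cocone_factor_homo : {homo cocone_factor : x y / x <= y}.
Proof.
move=> x y le_xy.
rewrite -(@cocone_factorE (pair_chain x y le_xy) x (or_introl erefl)).
rewrite -(@cocone_factorE (pair_chain x y le_xy) y (or_intror erefl)).
exact: (proj1 f_cocone).
Qed.

Lemma cocone_factor_unique (g : P -> Q) :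
  (forall (C : chain P) (x : chain_elt C), g (chain_inclusion x) = f C x) ->
  cocone_factor = g.
Proof.
move=> g_factors; apply: functional_extensionality => x.
exact: esym (g_factors (singleton_chain x) (exist _ x (erefl x))).
Qed.

End Factorization.
End ChainDiagram.

Arguments cocone_factor {d P d' Q} f x.
Arguments cocone_factorE {d P d' Q f} f_cocone {C x} Cx.

Theorem proposition6p1 (d : Order.disp_t) (P : porderType d) :
  is_colimit_of_chains (@chain_inclusion d P).
Proof.
split; first exact: chain_inclusion_cocone.
move=> d' Q f f_cocone; exists (cocone_factor f).
split; last by move=> g [_ g_factors]; exact: cocone_factor_unique.
split; first exact: cocone_factor_homo.
by move=> C [x Cx]; rewrite (cocone_factorE f_cocone).
Qed.
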